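(* Let $\psi$ be a CNF formula with only positive literals, with clauses $C_1,\dots,C_m$ each consisting of three distinct variables, and variables $x_1,\dots,x_p$, in which every variable appears in at least $3$ clauses. Let $G$ be the graph constructed as follows: (1) for each variable $x_i$ create a cycle $D_i$ whose number of vertices equals the number of clauses containing $x_i$; (2) add a vertex $a$ adjacent to every vertex of all cycles $D_1,\dots,D_p$; (3) for each clause $\{x_i,x_j,x_k\}$ add a vertex $u_{ijk}$ adjacent to one vertex of each of $D_i,D_j,D_k$, choosing in each cycle a vertex not yet adjacent to any clause-vertex; (4) subdivide once every edge of the cycles $D_1,\dots,D_p$ and every edge incident to $a$. If $\psi$ has an assignment in which every clause contains exactly one true variable, then $G$ has a $1/2$-shallow topological minor of density $\frac{5m}{2m+1}$.
   Context: A graph $H$ is a $1/2$-shallow topological minor of $G$ if some graph obtained from $H$ by subdividing each edge at most once is isomorphic to a subgraph of $G$. The density of $H$ is $\|H\|/|H|$ (number of edges divided by number of vertices). *)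

From HB Require Import structures.
From mathcomp Require Import all_boot all_order all_algebra.
Set Implicit Arguments. Unset Strict Implicit. Unset Printing Implicit Defensive.
Import GRing.Theory Num.Theory.

(* The vertex set is the whole type V (isolated vertices allowed). *)

Definition simple_graph (V : finType) (E : {set {set V}}) : Prop :=
  forall e, e \in E -> #|e| = 2.

Definition density (V : finType) (E : {set {set V}}) : rat :=
  (#|E|%:R / #|V|%:R)%R.

(* The graph obtained from (V,E) by subdividing once each edge of S
   (S a subset of E).  Its vertex type is V + S (one new vertex per
   subdivided edge); its edges are the non-subdivided edges of E and,
   for each subdivided edge e = {u,v}, the two edges {u,e} and {v,e}. *)
Definition subdiv_edges (V : finType) (E S : {set {set V}}) :
    {set {set (V + {e : {set V} | e \in S})}} :=
  [set g : {set (V + {e : {set V} | e \in S})} |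
     [exists e in E :\: S, g == [set inl x | x in e]]
  || [exists s : {e : {set V} | e \in S},
        [exists u in val s, g == [set inl u; inr s]]]].

(* H = (V,E) is a 1/2-shallow topological minor of G = (T,EG): some graph
   obtained from H by subdividing each edge at most once is isomorphic to a
   subgraph of G, i.e. admits an injective map into T sending edges to
   edges. *)
Definition half_shallow_top_minor (V : finType) (E : {set {set V}})
    (T : finType) (EG : {set {set T}}) : Prop :=
  exists S : {set {set V}}, S \subset E /\
  exists f : V + {e : {set V} | e \in S} -> T,
    injective f /\
    forall g, g \in subdiv_edges E S -> [set f x | x in g] \in EG.

Section Construction.
Variables (p m : nat) (C : 'I_m -> {set 'I_p}).

(* The cycle D_i has
   one vertex per clause containing x_i; we label it by that clause (it is the
   vertex of D_i made adjacent to the clause vertex u_j). *)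
Definition Inc : finType := {x : 'I_p * 'I_m | x.1 \in C x.2}.

(* vertices: a, clause vertices u_j, cycle vertices, subdivision vertices of
   cycle edges (one per incidence v, for the edge v -- nxt v), subdivision
   vertices of the edges a -- v. *)
Definition GV : finType := (unit + 'I_m + Inc + Inc + Inc)%type.

Definition va : GV := inl (inl (inl (inl tt))).
Definition vu (j : 'I_m) : GV := inl (inl (inl (inr j))).
Definition vc (v : Inc) : GV := inl (inl (inr v)).
Definition vsc (v : Inc) : GV := inl (inr v).
Definition vsa (v : Inc) : GV := inr v.

(* nxt gives the cyclic order of each cycle D_i: it stays inside the
   incidences of the same variable, is injective, and each D_i is a single
   orbit (a cycle through all incidences of x_i). *)
Definition cycle_structure (nxt : Inc -> Inc) : Prop :=
  [/\ injective nxt,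
      forall v : Inc, (val (nxt v)).1 = (val v).1 &
      forall v w : Inc, (val v).1 = (val w).1 -> fconnect nxt v w].

Definition G_edges (nxt : Inc -> Inc) : {set {set GV}} :=
     [set [set va; vsa v] | v : Inc]
  :|: [set [set vsa v; vc v] | v : Inc]
  :|: [set [set vc v; vsc v] | v : Inc]
  :|: [set [set vsc v; vc (nxt v)] | v : Inc]
  :|: [set [set vu (val v).2; vc v] | v : Inc].

End Construction.

From HB Require Import structures.
From mathcomp Require Import all_boot all_order all_algebra.
Set Implicit Arguments. Unset Strict Implicit. Unset Printing Implicit Defensive.

(* Fix an assignment making exactly one variable of each clause true.  Keep the
   vertex a and the 2m cycle vertices of false variables (two per clause).  Join
   a to each of them through the subdivided edge a-v, each of them to its cycle
   successor (a vertex of the same, hence false, variable) through the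
   subdivided cycle edge, and the two false vertices of each clause C_j to each
   other through u_j.  This gives 2m + 2m + m = 5m edges on 2m + 1 vertices,
   each subdivided exactly once in G; they are pairwise distinct because every
   cycle has at least three vertices. *)

Lemma order_le2 (T : finType) (f : T -> T) (x : T) : f (f x) = x -> order f x <= 2.
Proof.
by move=> ffx; apply: (@order_le_cycle _ _ [:: x; f x]); rewrite ?inE ?eqxx //= ffx !eqxx.
Qed.

Lemma half_shallow_top_minor_subdivide_all (V L T : finType) (lab : L -> {set V})
    (EG : {set {set T}}) (f : V -> T) (g : L -> T) :
  injective lab -> injective f -> injective g -> (forall x l, f x != g l) ->
  (forall l x, x \in lab l -> [set f x; g l] \in EG) ->
  half_shallow_top_minor [set lab l | l : L] EG.
Proof.
move=> lab_inj f_inj g_inj fg_neq fg_edge; set E := [set lab l | l : L].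
have codom_lab (s : {e | e \in E}) : val s \in codom lab.
  by have /imsetP[l _ ->] := valP s; apply: codom_f.
pose h (x : V + {e | e \in E}) :=
  match x with inl x => f x | inr s => g (iinv (codom_lab s)) end.
exists E; split=> //; exists h; split.
  move=> [x|s] [y|t] /=.
  - by move/f_inj->.
  - by move/eqP; rewrite (negbTE (fg_neq _ _)).
  - by move/esym/eqP; rewrite (negbTE (fg_neq _ _)).
  - by move/g_inj/(congr1 lab); rewrite !f_iinv => /val_inj->.
move=> e; rewrite inE setDv => /orP[/existsP[? /andP[]]|]; first by rewrite inE.
move=> /existsP[s /existsP[u /andP[su /eqP->]]].
by rewrite imsetU1 imset_set1 /=; apply: fg_edge; rewrite f_iinv.
Qed.

Section Incidences.
Variables (p m : nat) (C : 'I_m -> {set 'I_p}).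

Definition inc_var (v : Inc C) : 'I_p := (val v).1.
Definition inc_clause (v : Inc C) : 'I_m := (val v).2.

Lemma inc_eq (v w : Inc C) :
  inc_var v = inc_var w -> inc_clause v = inc_clause w -> v = w.
Proof.
case: v w => [[i j] ?] [[i' j'] ?]; rewrite /inc_var /inc_clause /= => ei ej.
by apply: val_inj; rewrite /= ei ej.
Qed.

Lemma card_inc_var (i : 'I_p) :
  #|[set v : Inc C | inc_var v == i]| = #|[set j | i \in C j]|.
Proof.
rewrite -(@card_in_imset _ _ inc_clause); last first.
  by move=> v w; rewrite !inE => /eqP vi /eqP wi; apply: inc_eq; rewrite vi wi.
apply: eq_card => j; rewrite inE; apply/imsetP/idP.
  by case=> v; rewrite inE => /eqP <- ->; apply: (valP v).
by move=> ij; exists (Sub (i, j) ij); rewrite ?inE.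
Qed.

Section Assignment.
Variable a : 'I_p -> bool.
Hypothesis one_true : forall j : 'I_m, #|[set i in C j | a i]| = 1.
Hypothesis three_vars : forall j : 'I_m, #|C j| = 3.

Definition FInc := {v : Inc C | ~~ a (inc_var v)}.

Definition clause_fincs (j : 'I_m) : {set FInc} :=
  [set v : FInc | inc_clause (val v) == j].

Lemma card_false_vars j : #|[set i in C j | ~~ a i]| = 2.
Proof.
have := cardsID [set i | a i] (C j); rewrite three_vars.
have -> : C j :&: [set i | a i] = [set i in C j | a i].
  by apply/setP => i; rewrite !inE.
have -> : C j :\: [set i | a i] = [set i in C j | ~~ a i].
  by apply/setP => i; rewrite !inE andbC.
by rewrite one_true => -[].
Qed.

Lemma card_clause_fincs j : #|clause_fincs j| = 2.
Proof.
rewrite -(card_false_vars j) -(@card_in_imset _ _ (fun v : FInc => inc_var (val v))).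
  apply: eq_card => i; rewrite inE; apply/imsetP/andP.
    by case=> v; rewrite inE => /eqP <- ->; split; [apply: (valP (val v)) | apply: (valP v)].
  by case=> ij ai; exists (Sub (Sub (i, j) ij) ai); rewrite ?inE.
move=> v w; rewrite !inE => /eqP vj /eqP wj vw.
by apply/val_inj/inc_eq; rewrite // vj wj.
Qed.

Lemma card_FInc : #|{: FInc}| = 2 * m.
Proof.
rewrite -sum1_card (partition_big (fun v : FInc => inc_clause (val v)) predT) //=.
rewrite (eq_bigr (fun _ => 2)) => [|j _].
  by rewrite sum_nat_const card_ord mulnC.
by rewrite sum1_card -(card_clause_fincs j) -cardsE; apply: eq_card => v; rewrite !inE.
Qed.

Section Cycles.
Hypothesis occ3 : forall i : 'I_p, 3 <= #|[set j | i \in C j]|.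
Variable nxt : Inc C -> Inc C.
Hypothesis nxt_var : forall v : Inc C, (val (nxt v)).1 = (val v).1.
Hypothesis nxt_fconnect :
  forall v w : Inc C, (val v).1 = (val w).1 -> fconnect nxt v w.

Lemma order_nxt_ge3 v : 3 <= order nxt v.
Proof.
rewrite (leq_trans (occ3 (inc_var v))) // -card_inc_var.
by apply/subset_leq_card/subsetP => w; rewrite !inE => /eqP/esym/nxt_fconnect.
Qed.

Lemma nxt_nxt_neq v : nxt (nxt v) != v.
Proof. by apply/eqP => /order_le2; rewrite leqNgt order_nxt_ge3. Qed.

Lemma nxt_neq v : nxt v != v.
Proof. by apply/eqP => nxt_v; have := nxt_nxt_neq v; rewrite !nxt_v eqxx. Qed.

Lemma fnxt_subproof (v : FInc) : ~~ a (inc_var (nxt (val v))).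
Proof. by rewrite /inc_var nxt_var; apply: (valP v). Qed.

Definition fnxt (v : FInc) : FInc := Sub (nxt (val v)) (fnxt_subproof v).

Lemma fnxt_neq v : fnxt v != v.
Proof. by rewrite -(inj_eq val_inj) nxt_neq. Qed.

Lemma clause_fincs_fnxt v j : v \in clause_fincs j -> fnxt v \notin clause_fincs j.
Proof.
rewrite !inE => /eqP vj; apply: contra (fnxt_neq v) => /eqP nvj.
by apply/eqP/val_inj/inc_eq; rewrite /inc_var /= ?nxt_var // nvj vj.
Qed.

(* The vertex None stands for a.  An edge [inl (inl v)] is a-v (subdivided at
   vsa v), [inl (inr v)] is the cycle edge from v to fnxt v (subdivided at
   vsc v) and [inr j] joins the two false vertices of C_j (subdivided at u_j). *)
Definition HEdge : finType := (FInc + FInc + 'I_m)%type.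

Definition hedge (l : HEdge) : {set option FInc} :=
  match l with
  | inl (inl v) => [set None; Some v]
  | inl (inr v) => [set Some v; Some (fnxt v)]
  | inr j => [set Some v | v in clause_fincs j]
  end.

Lemma mem_hedge_clause v j : (Some v \in hedge (inr j)) = (v \in clause_fincs j).
Proof. by rewrite mem_imset //; apply: Some_inj. Qed.

Lemma None_notin_hedge_clause j : None \notin hedge (inr j).
Proof. by apply/imsetP => -[]. Qed.

Lemma hedge_cycle_neq_clause v j : hedge (inl (inr v)) != hedge (inr j).
Proof.
apply/negP => /eqP/setP eq_vj; have := eq_vj (Some v); have := eq_vj (Some (fnxt v)).
rewrite !mem_hedge_clause !in_set2 !eqxx orbT => /esym fvj /esym vj.
by have := clause_fincs_fnxt vj; rewrite fvj.
Qed.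

Lemma hedge_inj : injective hedge.
Proof.
move=> [[v|v]|j] [[w|w]|k] eq_vw; move/setP: (eq_vw) => mem_vw.
- by have := mem_vw (Some v); rewrite /= !inE eqxx orbT /= => /esym/eqP[->].
- by have := mem_vw None; rewrite /= !inE.
- by have := mem_vw None; rewrite /= !inE (negbTE (None_notin_hedge_clause _)).
- by have := mem_vw None; rewrite /= !inE.
- have := mem_vw (Some v); rewrite /= !inE eqxx /= => /esym/orP[/eqP[->]//|/eqP[v_fw]].
  have := mem_vw (Some w); rewrite /= !inE eqxx /= => /orP[/eqP[->]//|/eqP[w_fv]].
  by have := nxt_nxt_neq (val v); rewrite {2}v_fw w_fv /= eqxx.
- by have := hedge_cycle_neq_clause v k; rewrite eq_vw eqxx.
- by have := mem_vw None; rewrite /= !inE (negbTE (None_notin_hedge_clause _)).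
- by have := hedge_cycle_neq_clause w j; rewrite eq_vw eqxx.
- have [x xj] : exists x, x \in clause_fincs j.
    by apply/set0Pn; rewrite -card_gt0 card_clause_fincs.
  have := mem_vw (Some x); rewrite !mem_hedge_clause xj.
  by move: xj; rewrite !inE => /eqP-> /esym/eqP->.
Qed.

Lemma simple_graph_hedge : simple_graph [set hedge l | l : HEdge].
Proof.
move=> _ /imsetP[[[v|v]|j] _ ->] /=; rewrite ?cards2 //.
- by rewrite (inj_eq Some_inj) eq_sym fnxt_neq.
- by rewrite card_imset ?card_clause_fincs //; apply: Some_inj.
Qed.

Definition embed_vertex (x : option FInc) : GV C :=
  if x is Some v then vc (val v) else va C.

Definition embed_hedge (l : HEdge) : GV C :=
  match l with
  | inl (inl v) => vsa (val v)
  | inl (inr v) => vsc (val v)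
  | inr j => vu C j
  end.

Lemma embed_vertex_inj : injective embed_vertex.
Proof. by move=> [v|] [w|] //= [/val_inj->]. Qed.

Lemma embed_hedge_inj : injective embed_hedge.
Proof. by move=> [[v|v]|j] [[w|w]|k] //= [] => [/val_inj|/val_inj|] ->. Qed.

Lemma embed_vertex_neq_hedge x l : embed_vertex x != embed_hedge l.
Proof. by case: x => [?|]; case: l => [[?|?]|?]. Qed.

Lemma embed_hedge_edge l x :
  x \in hedge l -> [set embed_vertex x; embed_hedge l] \in G_edges nxt.
Proof.
rewrite /G_edges !in_setU; case: l => [[v|v]|j] /=.
- rewrite !inE => /orP[]/eqP-> /=.
    by rewrite (imset_f (fun w => [set va C; vsa w])).
  by rewrite setUC (imset_f (fun w => [set vsa w; vc w])) ?orbT.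
- rewrite !inE => /orP[]/eqP-> /=.
    by rewrite (imset_f (fun w => [set vc w; vsc w])) ?orbT.
  by rewrite setUC (imset_f (fun w => [set vsc w; vc (nxt w)])) ?orbT.
- case/imsetP=> w; rewrite inE => /eqP <- -> /=.
  by rewrite setUC (imset_f (fun w => [set vu C (inc_clause w); vc w])) ?orbT.
Qed.

End Cycles.
End Assignment.
End Incidences.

Theorem lemma2 (p m : nat) (C : 'I_m -> {set 'I_p})
  (hC3 : forall j : 'I_m, #|C j| = 3)
  (hocc : forall i : 'I_p, 3 <= #|[set j | i \in C j]|)
  (nxt : Inc C -> Inc C) (hnxt : cycle_structure nxt)
  (hsat : exists a : 'I_p -> bool, forall j : 'I_m, #|[set i in C j | a i]| = 1) :
  exists (V : finType) (E : {set {set V}}),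
    [/\ simple_graph E,
        half_shallow_top_minor E (G_edges nxt) &
        density E = ((5 * m)%:R / (2 * m + 1)%:R)%R].
Proof.
case: hnxt => _ nxt_var nxt_fconnect; case: hsat => a one_true.
exists (option (FInc C a)), [set hedge nxt_var l | l : HEdge C a]; split.
- exact: simple_graph_hedge.
- apply: half_shallow_top_minor_subdivide_all.
  + exact: hedge_inj.
  + exact: embed_vertex_inj.
  + exact: embed_hedge_inj.
  + exact: embed_vertex_neq_hedge.
  + exact: embed_hedge_edge.
- rewrite /density card_imset; last exact: hedge_inj.
  rewrite card_option !card_sum card_ord (card_FInc one_true hC3).
  by rewrite -{3}(mul1n m) -!mulnDl !addn1.
Qed.
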